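(* Let $G$ be the path graph with vertex set $V=\{0,\dots,n-1\}$ and edges $\{v,v+1\}$, let $2^k<n$, and let $T\in\mathcal{T}_k$. For $v\in V$ let $\lambda(v)$ denote the unique leaf $\lambda$ of $T$ with $v\in V(\lambda)$. Then $C(T)$ is a maximal covered set if and only if a) $T$ has exactly $2^k$ leaves, and b) for every vertex $v\in V$ with $v-1\notin C(T)$ and $v\notin C(T)$, we have $\lambda(v-1)=\lambda(v)$.
   Context: A search strategy for a tree $H$ is a rooted binary tree defined recursively: a single node is a search strategy for any $H$; otherwise the root is labeled with an edge $uv$ of $H$ and its two child subtrees are search strategies for the components $H_u,H_v$ of $H-uv$ containing $u,v$. Nodes get vertex sets: the root gets $V(H)$, the children of a root labeled $uv$ get $V(H_u),V(H_v)$, recursively; the leaf sets partition $V$. $C(T)$ is the set of $v$ with $V(\lambda)=\{v\}$ for some leaf $\lambda$. $\mathcal{T}_k$ is the set of search strategies for $G$ of height at most $k$. $C(T)$ is a maximal covered set if there is no $T'\in\mathcal{T}_k$ with $C(T)\subsetneq C(T')$. *)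

From mathcomp Require Import ssreflect ssrfun ssrbool eqtype ssrnat seq choice fintype finset fingraph.
Set Implicit Arguments. Unset Strict Implicit. Unset Printing Implicit Defensive.

(* Search strategies (binary trees whose internal nodes are labeled by edges uv). *)
Inductive strat (T : Type) : Type :=
  | SLeaf : strat T
  | SNode : T -> T -> strat T -> strat T -> strat T.
Arguments SLeaf {T}.

Section SearchStrategies.
Variables (T : finType) (G : rel T).

Definition del_rel (S : {set T}) (u v : T) : rel T :=
  fun x y => [&& x \in S, y \in S, G x y &
                 ~~ (((x == u) && (y == v)) || ((x == v) && (y == u)))].

Definition comp (S : {set T}) (u v w : T) : {set T} :=
  [set x | connect (del_rel S u v) w x].

Fixpoint is_strat (S : {set T}) (t : strat T) : bool :=
  match t with
  | SLeaf => true
  | SNode u v l r =>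
      [&& u \in S, v \in S, G u v,
          is_strat (comp S u v u) l & is_strat (comp S u v v) r]
  end.

(* the vertex sets V(lambda) of the leaves, left to right *)
Fixpoint leafsets (S : {set T}) (t : strat T) : seq {set T} :=
  match t with
  | SLeaf => [:: S]
  | SNode u v l r => leafsets (comp S u v u) l ++ leafsets (comp S u v v) r
  end.

End SearchStrategies.

Fixpoint height (T : Type) (t : strat T) : nat :=
  match t with
  | SLeaf => 0
  | SNode _ _ l r => (maxn (height l) (height r)).+1
  end.

Fixpoint nleaves (T : Type) (t : strat T) : nat :=
  match t with
  | SLeaf => 1
  | SNode _ _ l r => nleaves l + nleaves r
  end.

Definition covered (T : finType) (G : rel T) (t : strat T) : {set T} :=
  [set x | [set x] \in leafsets G setT t].

Definition in_Tk (T : finType) (G : rel T) (k : nat) (t : strat T) : Prop :=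
  is_strat G setT t /\ height t <= k.

Definition maximal_covered (T : finType) (G : rel T) (k : nat) (t : strat T) : Prop :=
  ~ exists t' : strat T, in_Tk G k t' /\ covered G t \proper covered G t'.

Definition path_graph (n : nat) : rel 'I_n :=
  fun x y => (x.+1 == y :> nat) || (y.+1 == x :> nat).
Arguments path_graph : clear implicits.

From mathcomp Require Import ssreflect ssrfun ssrbool eqtype ssrnat seq path.
From mathcomp Require Import fintype finset fingraph.
From mathcomp Require Import zify.

(* Every edge of the path is {d.-1, d} for a unique cut point d, so a search
   strategy is determined, up to the order of its leaves, by the duplicate-free
   sequence s of its cut points: it has size s + 1 leaves, the classes of
   vertices not separated by a cut of s.  Conversely every such sequence with
   fewer than 2^k cuts is realised in height k, by first cutting at a point that
   leaves fewer than 2^(k-1) cuts on either side.  Hence C(T) is the set of x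
   with x in 0 :: s and x + 1 in n :: s, and maximality becomes a statement about
   cut sequences.  If a cut is still available, or if some cut d has neither
   d - 1 nor d covered, then putting that cut just after the last cut c below an
   uncut edge covers c and uncovers nothing.  Conversely, under a) and b) every
   cut of T borders a covered vertex, so a T' covering more keeps all 2^k - 1
   cuts of T, has room for no other, and covers the same set. *)

Set Implicit Arguments. Unset Strict Implicit. Unset Printing Implicit Defensive.

Lemma nleaves_height (T : Type) k (t : strat T) : height t <= k -> nleaves t <= 2 ^ k.
Proof.
elim: t k => [|u v l IHl r IHr] [|k] //=; first by rewrite expn_gt0.
rewrite ltnS geq_max => /andP[hl hr].
by rewrite expnS mul2n -addnn leq_add ?IHl ?IHr.
Qed.

Definition cut_seq (a b : nat) (s : seq nat) : bool :=
  uniq s && all (fun d => a < d < b) s.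

Definition separated (s : seq nat) (x y : nat) : bool :=
  has (fun d => minn x y < d <= maxn x y) s.

Lemma separated_sym s x y : separated s x y = separated s y x.
Proof. by rewrite /separated minnC maxnC. Qed.

Lemma separated_refl s x : separated s x x = false.
Proof. by apply/hasPn => d _; lia. Qed.

Lemma separated_succ s x : separated s x x.+1 = (x.+1 \in s).
Proof.
apply/hasP/idP => [[d ds d_x]|]; last by exists x.+1 => //; lia.
by have -> : x.+1 = d by lia.
Qed.

Lemma separated_trans s x y z : separated s x z -> separated s x y || separated s y z.
Proof.
case/hasP=> d ds sep_d; apply/orP.
by case: (boolP (minn x y < d <= maxn x y)) => d_xy; [left | right];
  apply/hasP; exists d => //; lia.
Qed.

Lemma cut_seq_cat a c b s1 s2 : a < c < b ->
  cut_seq a c s1 -> cut_seq c b s2 -> cut_seq a b (s1 ++ c :: s2).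
Proof.
move=> /andP[lt_ac lt_cb] /andP[uniq1 range1] /andP[uniq2 range2].
have lt_1c d : d \in s1 -> d < c by move/(allP range1); lia.
have lt_c2 d : d \in s2 -> c < d by move/(allP range2); lia.
apply/andP; split.
  rewrite cat_uniq /= negb_or uniq1 uniq2 andbT /= -andbA; apply/and3P; split.
  - by apply/negP => /lt_1c; rewrite ltnn.
  - by apply/hasPn => d /lt_c2 lt_cd; apply/negP => /lt_1c; lia.
  - by apply/negP => /lt_c2; rewrite ltnn.
rewrite all_cat /= lt_ac lt_cb; apply/and3P; split=> //.
  by apply: sub_all range1 => d; lia.
by apply: sub_all range2 => d; lia.
Qed.

Lemma cut_seq_split k a b s : cut_seq a b s -> 0 < size s -> size s < 2 ^ k.+1 ->
  exists s1 c s2, [/\ s =i s1 ++ c :: s2, a < c < b, cut_seq a c s1,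
                      cut_seq c b s2 & (size s1 < 2 ^ k) && (size s2 < 2 ^ k)].
Proof.
move=> /andP[uniq_s range_s] s_gt0 s_lt; set r := sort leq s.
have uniq_r : uniq r by rewrite sort_uniq.
have r_sorted : sorted ltn r.
  by rewrite ltn_sorted_uniq_leq uniq_r sort_sorted //; apply: leq_total.
have r_range : all (fun d => a < d < b) r by rewrite all_sort.
set m := minn (2 ^ k).-1 (size s).-1.
have m_lt : m < size r by rewrite size_sort; lia.
set c := nth 0 r m; set s1 := take m r; set s2 := drop m.+1 r.
have def_r : r = s1 ++ c :: s2 by rewrite -drop_nth ?cat_take_drop.
move: (r_sorted); rewrite def_r (sorted_pairwise ltn_trans) pairwise_cat pairwise_cons.
rewrite allrel_consr => /and4P[/andP[lt_1c _] _ lt_c2 _].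
have ac_cb : a < c < b by apply: (allP r_range); rewrite mem_nth.
exists s1, c, s2; split=> //.
- by move=> x; rewrite -def_r mem_sort.
- apply/andP; split; first exact: take_uniq.
  apply/allP => d d_in.
  by move: (allP r_range d (mem_take d_in)) (allP lt_1c d d_in) => /=; lia.
- apply/andP; split; first exact: drop_uniq.
  apply/allP => d d_in.
  by move: (allP r_range d (mem_drop d_in)) (allP lt_c2 d d_in) => /=; lia.
have pow_gt0 : 0 < 2 ^ k by rewrite expn_gt0.
move: s_lt s_gt0 pow_gt0; rewrite size_take size_drop m_lt size_sort expnS /m.
by move: (size s) (2 ^ k) => N P; lia.
Qed.

Lemma cut_gap s d : d \notin 0 :: s -> exists c, [/\ c < d, c \in 0 :: s & c.+1 \notin s].
Proof.
elim: d => [|d IHd]; first by rewrite mem_head.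
case d_in: (d \in 0 :: s) => d1_notin.
  by exists d; split=> //; move: d1_notin; rewrite in_cons.
have [c [lt_cd c_in c1_notin]] := IHd (negbT d_in).
by exists c; split=> //; apply: ltnW.
Qed.

Section PathGraph.
Variable n : nat.
Local Notation G := (path_graph n).

Definition itv (a b : nat) : {set 'I_n} := [set x : 'I_n | a <= x < b].

Lemma setT_itv : [set: 'I_n] = itv 0 n.
Proof. by apply/setP => x; rewrite !inE ltn_ord. Qed.

Lemma del_rel_sym S u v : symmetric (del_rel G S u v).
Proof.
move=> x y; rewrite /del_rel /path_graph andbCA [(y.+1 == _) || _]orbC.
by rewrite [(y == u) && _]andbC [(y == v) && _]andbC [(x == v) && _ || _]orbC.
Qed.

Lemma del_rel_side S (u v x y : 'I_n) : G u v -> del_rel G S u v x y ->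
  [/\ x \in S, y \in S & (x < maxn u v) = (y < maxn u v)].
Proof.
rewrite /del_rel /path_graph -!(val_eqE x) -!(val_eqE y) /=.
move=> Guv /and4P[-> -> Gxy uv_xy].
by split=> //; move: Guv Gxy uv_xy; lia.
Qed.

Lemma connect_succ (e : rel 'I_n) (x y : 'I_n) : x <= y ->
  (forall z z' : 'I_n, x <= z -> z' <= y -> z' = z.+1 :> nat -> e z z') ->
  connect e x y.
Proof.
move=> le_xy step; have [m] : exists m, y = x + m :> nat by exists (y - x); lia.
elim: m y le_xy step => [|m IHm] y le_xy step def_y.
  by have -> : y = x by apply: val_inj; rewrite /= def_y addn0.
have lt_y' : x + m < n by move: (ltn_ord y); lia.
apply: connect_trans (connect1 (step (Ordinal lt_y') y _ _ _)) => /=; try lia.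
by apply: IHm => //= [|z z' *]; [lia | apply: step; lia].
Qed.

Lemma comp_itv a b (u v w : 'I_n) : G u v ->
  u \in itv a b -> v \in itv a b -> w \in itv a b ->
  comp G (itv a b) u v w =
    if w < maxn u v then itv a (maxn u v) else itv (maxn u v) b.
Proof.
move=> Guv uS vS wS; set c := maxn u v; set e := del_rel G (itv a b) u v.
have sideE : comp G (itv a b) u v w = [set y in itv a b | (y < c) == (w < c)].
  apply/setP => y; rewrite [LHS]inE [RHS]inE; apply/idP/andP => [|[yS /eqP side_y]].
    have side_closed : closed e [pred z | (z \in itv a b) && ((z < c) == (w < c))].
      by move=> x z /(del_rel_side Guv) [xS zS side]; rewrite !unfold_in /= xS zS /c side.
    by move/(closed_connect side_closed); rewrite unfold_in /= wS eqxx => /esym/andP.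
  wlog le_wy : w y wS yS side_y / w <= y.
    move=> IH; case: (leqP w y) => [|/ltnW le_yw]; first exact: IH.
    by rewrite (sym_connect_sym (@del_rel_sym _ u v)); apply: IH.
  apply: connect_succ => // z z' le_wz le_z'y def_z'.
  move: wS yS Guv side_y; rewrite /e /del_rel /path_graph !inE.
  by rewrite -!(val_eqE z) -!(val_eqE z') /= def_z' /c; lia.
move: uS vS wS; rewrite sideE !inE => uS vS wS.
apply/setP => y; case: ifP => side_w; rewrite !inE.
  all: by move: side_w Guv; rewrite /c /path_graph; lia.
Qed.

Definition block a b s (x : 'I_n) : {set 'I_n} := [set y in itv a b | ~~ separated s x y].

Definition blocks a b s : {set {set 'I_n}} := [set block a b s x | x in itv a b].

Lemma block_refl a b s x : x \in itv a b -> x \in block a b s x.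
Proof. by move=> x_in; rewrite inE x_in separated_refl. Qed.

Lemma eq_block a b s x y : y \in block a b s x -> block a b s y = block a b s x.
Proof.
rewrite inE => /andP[_ sep_xy]; apply/setP => z; rewrite !inE; congr (_ && ~~ _).
apply/idP/idP => [/(separated_trans x) | /(separated_trans y)].
  by rewrite separated_sym (negPf sep_xy).
by rewrite (negPf sep_xy).
Qed.

Lemma eq_blocks a b s1 s2 : s1 =i s2 -> blocks a b s1 = blocks a b s2.
Proof.
move=> eq_s; apply: eq_imset => x; apply/setP => y.
by rewrite !inE /separated (eq_has_r eq_s).
Qed.

Lemma blocks_nil a b : a < b -> b <= n -> blocks a b [::] = [set itv a b].
Proof.
move=> lt_ab le_bn; have lt_an : a < n by lia.
have block_nil x : block a b [::] x = itv a b by apply/setP => y; rewrite inE andbT.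
apply/setP => L; rewrite inE; apply/imsetP/eqP => [[x _ ->] // | ->].
by exists (Ordinal lt_an); rewrite ?block_nil // inE /=; lia.
Qed.

Lemma blocks_cat a c b s1 s2 : a < c < b ->
  cut_seq a c s1 -> cut_seq c b s2 ->
  blocks a b (s1 ++ c :: s2) = blocks a c s1 :|: blocks c b s2.
Proof.
move=> /andP[lt_ac lt_cb] /andP[_ range1] /andP[_ range2].
have no_sep1 x y : c <= x -> c <= y -> separated s1 x y = false.
  by move=> *; apply/hasPn => d /(allP range1); lia.
have no_sep2 x y : x < c -> y < c -> separated s2 x y = false.
  by move=> *; apply/hasPn => d /(allP range2); lia.
have sep_cat x y : separated (s1 ++ c :: s2) x y =
    [|| separated s1 x y, minn x y < c <= maxn x y | separated s2 x y].
  by rewrite /separated has_cat.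
have block_cat x : block a b (s1 ++ c :: s2) x =
    if x < c then block a c s1 x else block c b s2 x.
  apply/setP => y; case: (ltnP x c) => x_side; rewrite !inE sep_cat;
    case: (ltnP y c) => y_side; [rewrite no_sep2 // | | | rewrite no_sep1 //];
    by case: (separated s1 x y); case: (separated s2 x y) => /=; lia.
rewrite /blocks.
have -> : itv a b = itv a c :|: itv c b by apply/setP => x; rewrite !inE; lia.
rewrite imsetU; congr (_ :|: _); apply: eq_in_imset => x; rewrite inE block_cat.
  by case/andP=> _ ->.
by rewrite [x < c]ltnNge => /andP[-> _].
Qed.

Lemma leafsets_cut_seq a b t : a < b -> b <= n -> is_strat G (itv a b) t ->
  exists2 s, cut_seq a b s &
    nleaves t = (size s).+1 /\ leafsets G (itv a b) t =i blocks a b s.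
Proof.
elim: t a b => [|u v l IHl r IHr] a b lt_ab le_bn /=.
  by move=> _; exists [::] => //; split=> // L; rewrite blocks_nil // !inE.
case/and5P=> uS vS Guv strat_l strat_r; set c := maxn u v.
have ac_cb : a < c < b by move: uS vS Guv; rewrite !inE /c /path_graph; lia.
have [lt_ac lt_cb] : a < c /\ c < b by lia.
have glue (ls1 ls2 : seq {set 'I_n}) m1 m2 :
    (exists2 s1, cut_seq a c s1 & m1 = (size s1).+1 /\ ls1 =i blocks a c s1) ->
    (exists2 s2, cut_seq c b s2 & m2 = (size s2).+1 /\ ls2 =i blocks c b s2) ->
    exists2 s, cut_seq a b s & m1 + m2 = (size s).+1 /\ ls1 ++ ls2 =i blocks a b s.
  move=> [s1 cut1 [-> leaves1]] [s2 cut2 [-> leaves2]].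
  exists (s1 ++ c :: s2); first exact: cut_seq_cat.
  split=> [|L]; first by rewrite size_cat.
  by rewrite mem_cat leaves1 leaves2 blocks_cat // inE.
have le_cn : c <= n by lia.
rewrite !(comp_itv Guv uS vS) // in strat_l strat_r *.
case/orP: (Guv) => /eqP uv.
  have [u_lt v_ge] : u < c /\ (v < c) = false by rewrite /c; lia.
  rewrite u_lt v_ge in strat_l strat_r *.
  by apply: glue; [apply: IHl | apply: IHr].
have [u_ge v_lt] : (u < c) = false /\ v < c by rewrite /c; lia.
rewrite u_ge v_lt in strat_l strat_r *.
have [s cut_s [size_s leaves_s]] :=
  glue _ _ _ _ (IHr _ _ lt_ac le_cn strat_r) (IHl _ _ lt_cb le_bn strat_l).
by exists s => //; split=> [|L]; rewrite 1?addnC // mem_cat orbC -mem_cat.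
Qed.

Lemma strat_of_cut_seq k a b s :
  a < b -> b <= n -> cut_seq a b s -> (size s).+1 <= 2 ^ k ->
  exists t, [/\ is_strat G (itv a b) t, height t <= k &
               leafsets G (itv a b) t =i blocks a b s].
Proof.
elim: k a b s => [|k IHk] a b s lt_ab le_bn cut_s size_s;
  (case: (posnP (size s)) => [/size0nil -> | s_gt0];
   first by exists SLeaf; split=> // L; rewrite blocks_nil // !inE).
  by move: size_s s_gt0; rewrite expn0; lia.
have [s1 [c [s2 [eq_s ac_cb cut1 cut2 /andP[size1 size2]]]]] :=
  cut_seq_split cut_s s_gt0 size_s.
have [lt_ac lt_cb] : a < c /\ c < b by lia.
have le_cn : c <= n by lia.
have [tl [strat_l height_l leaves_l]] := IHk a c s1 lt_ac le_cn cut1 size1.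
have [tr [strat_r height_r leaves_r]] := IHk c b s2 lt_cb le_bn cut2 size2.
have lt_cn : c < n by lia.
have lt_c'n : c.-1 < n by lia.
pose u := Ordinal lt_c'n; pose v := Ordinal lt_cn.
have Guv : G u v by rewrite /path_graph /=; lia.
have [uS vS] : u \in itv a b /\ v \in itv a b by rewrite !inE /=; lia.
have [c_max u_lt v_ge] : [/\ maxn u v = c, u < c & (v < c) = false] by split=> /=; lia.
exists (SNode u v tl tr); rewrite /= !(comp_itv Guv uS vS) // c_max u_lt v_ge.
split; first by rewrite uS vS Guv strat_l strat_r.
  by rewrite ltnS geq_max height_l height_r.
by move=> L; rewrite mem_cat leaves_l leaves_r (eq_blocks _ _ eq_s) blocks_cat // inE.
Qed.

Definition cut_covered (s : seq nat) : {set 'I_n} :=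
  [set x : 'I_n | ((x : nat) \in 0 :: s) && (x.+1 \in n :: s)].

Lemma block_set1 s (x : 'I_n) : (block 0 n s x == [set x]) = (x \in cut_covered s).
Proof.
rewrite inE !in_cons; apply/eqP/andP => [block_x | [x_cut x1_cut]].
  have block_neighbour (y : 'I_n) : separated s x y = false -> y = x :> nat.
    move=> no_sep; have : y \in block 0 n s x by rewrite !inE ltn_ord no_sep.
    by rewrite block_x inE => /eqP ->.
  split; apply/negPn/negP => /norP[/eqP x_end x_notin].
    have lt_x'n : x.-1 < n by move: (ltn_ord x); lia.
    have x_pred : x = (x.-1).+1 :> nat by lia.
    have := block_neighbour (Ordinal lt_x'n).
    by rewrite /= separated_sym {2}x_pred separated_succ -x_pred (negPf x_notin); lia.
  have lt_x1n : x.+1 < n by move: (ltn_ord x); lia.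
  have := block_neighbour (Ordinal lt_x1n).
  by rewrite /= separated_succ (negPf x_notin); lia.
apply/setP => y; rewrite !inE ltn_ord /=.
apply/idP/eqP => [not_sep | ->]; last by rewrite separated_refl.
apply/val_inj/eqP; apply: contraNT not_sep => y_neq; apply/hasP.
case: (ltngtP y x) y_neq => // [y_lt | y_gt] _.
  by exists (nat_of_ord x); [move: x_cut; case: eqP => // x0; lia | lia].
by exists x.+1; [move: x1_cut; case: eqP => // x1; move: (ltn_ord y); lia | lia].
Qed.

Lemma covered_blocks t s :
  leafsets G setT t =i blocks 0 n s -> covered G t = cut_covered s.
Proof.
move=> leaves; apply/setP => x; rewrite inE leaves -block_set1.
apply/imsetP/eqP => [[y _ block_y] | <-]; last by exists x; rewrite // inE ltn_ord.
have x_in : x \in block 0 n s y by rewrite -block_y set11.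
by rewrite (eq_block x_in) block_y.
Qed.

Lemma same_leafP (ls : seq {set 'I_n}) s (u v : 'I_n) : ls =i blocks 0 n s ->
  val u = (val v).-1 -> 0 < val v ->
  (exists2 L, L \in ls & (u \in L) && (v \in L)) <-> val v \notin s.
Proof.
move=> leaves /= uv v_gt0; have v_succ : v = u.+1 :> nat by lia.
split=> [[L] | v_notin].
  rewrite leaves => /imsetP[y _ ->] /andP[u_in v_in].
  move: u_in; rewrite -(eq_block v_in) inE separated_sym v_succ separated_succ.
  by case/andP.
exists (block 0 n s u).
  by rewrite leaves; apply/imsetP; exists u; rewrite // inE ltn_ord.
by rewrite block_refl ?inE ?ltn_ord //= v_succ separated_succ -v_succ v_notin.
Qed.

Lemma extend_coveredP k (C : {set 'I_n}) : 0 < n ->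
  (exists t, in_Tk G k t /\ C \proper covered G t) <->
  (exists s, [/\ cut_seq 0 n s, (size s).+1 <= 2 ^ k & C \proper cut_covered s]).
Proof.
rewrite /in_Tk setT_itv => n_gt0.
split=> [[t [[strat_t height_t] C_t]] | [s [cut_s size_s C_s]]].
  have [s cut_s [size_t leaves]] := leafsets_cut_seq n_gt0 (leqnn n) strat_t.
  exists s; split=> //; last by rewrite -(covered_blocks (t := t)) ?setT_itv.
  by rewrite -size_t nleaves_height.
have [t [strat_t height_t leaves]] := strat_of_cut_seq n_gt0 (leqnn n) cut_s size_s.
by exists t; split=> //; rewrite (covered_blocks (s := s)) ?setT_itv.
Qed.

Lemma cut_covered_subset s s' : {subset s <= s'} -> cut_covered s \subset cut_covered s'.
Proof.
move=> sub; apply/subsetP => x; rewrite !inE.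
by case/andP=> /orP[-> | /sub ->] /orP[-> | /sub ->]; rewrite ?orbT.
Qed.

Lemma cut_covered_rem s (u v : 'I_n) : uniq s -> v = u.+1 :> nat ->
  u \notin cut_covered s -> v \notin cut_covered s ->
  cut_covered s \subset cut_covered (rem (nat_of_ord v) s).
Proof.
move=> uniq_s v_succ u_unc v_unc; apply/subsetP => x x_cov.
have x_neq_v : (x == v :> nat) = false.
  by apply/negbTE; apply: contraNneq v_unc => /val_inj <-.
have x1_neq_v : (x.+1 == v) = false.
  by rewrite v_succ eqSS; apply/negbTE; apply: contraNneq u_unc => /val_inj <-.
by move: x_cov; rewrite !inE !(mem_rem_uniq _ uniq_s) !inE x_neq_v x1_neq_v.
Qed.

Lemma cut_covered_proper s s0 c : cut_covered s \subset cut_covered s0 ->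
  c \in 0 :: s0 -> c.+1 < n -> c.+1 \notin s ->
  cut_covered s \proper cut_covered (c.+1 :: s0).
Proof.
move=> sub c_in lt_c1n c1_notin; apply/properP; split.
  by apply: subset_trans sub (cut_covered_subset _) => d d_in; rewrite in_cons d_in orbT.
have lt_cn : c < n by apply: ltnW.
exists (Ordinal lt_cn); rewrite !inE /=.
  apply/andP; split; last by apply/or3P; apply: Or32.
  by move: c_in; rewrite !inE => /orP[-> | ->]; rewrite ?orbT.
by rewrite (negPf c1_notin) orbF; apply/nandP; right; apply/eqP; lia.
Qed.

Definition maximal_cuts K s :=
  ~ exists s', [/\ cut_seq 0 n s', (size s').+1 <= K & cut_covered s \proper cut_covered s'].

Lemma maximal_cuts_size K s : K <= n -> cut_seq 0 n s -> (size s).+1 <= K ->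
  maximal_cuts K s -> (size s).+1 = K.
Proof.
move=> le_Kn /andP[uniq_s range_s] size_s max_s; apply/eqP.
rewrite eqn_leq size_s leqNgt; apply/negP => lt_sK.
have [d d_range d_notin] : exists2 d, 0 < d < n & d \notin s.
  have : has (fun d => d \notin s) (iota 1 n.-1).
    apply/negPn/negP => /hasPn all_in.
    have := uniq_leq_size (iota_uniq 1 n.-1) (fun d d_in => negbNE (all_in d d_in)).
    by rewrite size_iota; move: (size s) lt_sK => m; lia.
  by case/hasP=> d; rewrite mem_iota => d_range d_notin; exists d => //; lia.
have [|c [lt_cd c_in c1_notin]] := @cut_gap s d.
  by rewrite in_cons negb_or d_notin andbT; lia.
apply: max_s; exists (c.+1 :: s); split=> //; last by apply: cut_covered_proper => //; lia.
by rewrite /cut_seq /= c1_notin uniq_s range_s andbT; lia.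
Qed.

Lemma maximal_cuts_adjacent K s :
  cut_seq 0 n s -> (size s).+1 <= K -> maximal_cuts K s ->
  forall u v : 'I_n, val u = (val v).-1 -> 0 < val v ->
    u \notin cut_covered s -> v \notin cut_covered s -> val v \notin s.
Proof.
move=> /andP[uniq_s range_s] size_s max_s u v /= uv v_gt0 u_unc v_unc.
apply/negP => v_in; have v_succ : v = u.+1 :> nat by lia.
have u_notin : (u : nat) \notin 0 :: s.
  by apply: contra u_unc => u_in; rewrite inE u_in -v_succ in_cons v_in orbT.
have [c [lt_cu c_in c1_notin]] := cut_gap u_notin.
have c1_notin_rem : c.+1 \notin rem (nat_of_ord v) s.
  by apply: contra c1_notin; apply: mem_rem.
apply: max_s; exists (c.+1 :: rem (nat_of_ord v) s); split.
- rewrite /cut_seq /= c1_notin_rem rem_uniq //=; apply/andP.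
  split; first by move: (ltn_ord u); lia.
  by apply/allP => d /mem_rem /(allP range_s).
- have s_gt0 : 0 < size s by case: (s) v_in.
  by rewrite /= size_rem // prednK.
apply: cut_covered_proper c1_notin;
  [exact: cut_covered_rem uniq_s v_succ u_unc v_unc | | by move: (ltn_ord u); lia].
move: c_in; rewrite !inE (mem_rem_uniq _ uniq_s) !inE => /orP[-> // | ->].
by rewrite andbT orbC; lia.
Qed.

Lemma adjacent_maximal_cuts K s : cut_seq 0 n s -> (size s).+1 = K ->
  (forall u v : 'I_n, val u = (val v).-1 -> 0 < val v ->
     u \notin cut_covered s -> v \notin cut_covered s -> val v \notin s) ->
  maximal_cuts K s.
Proof.
move=> /andP[uniq_s range_s] size_K adjacent [s' [/andP[uniq_s' _] size_s' proper_s]].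
have sub : {subset s <= s'}.
  move=> d d_in; have /andP[] := allP range_s d d_in.
  case: d d_in => // m m1_in _ lt_m1n; have lt_mn : m < n by apply: ltnW.
  have : (Ordinal lt_mn \in cut_covered s) || (Ordinal lt_m1n \in cut_covered s).
    apply/negPn/negP => /norP[u_unc v_unc].
    have := adjacent (Ordinal lt_mn) (Ordinal lt_m1n) (erefl m) isT u_unc v_unc.
    by rewrite /= m1_in.
  case/orP=> /(subsetP (proper_sub proper_s)); rewrite !inE /= => /andP[] // _.
  by case/orP=> // /eqP m1_n; move: lt_m1n; rewrite m1_n ltnn.
have [|_ eq_s] := uniq_min_size uniq_s sub; first by rewrite -ltnS size_K.
move: proper_s; suff -> : cut_covered s = cut_covered s' by rewrite properxx.
by apply/eqP; rewrite eqEsubset !cut_covered_subset // => d; rewrite eq_s.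
Qed.

Lemma maximal_cutsP K s : K <= n -> cut_seq 0 n s -> (size s).+1 <= K ->
  maximal_cuts K s <->
  (size s).+1 = K /\
  (forall u v : 'I_n, val u = (val v).-1 -> 0 < val v ->
     u \notin cut_covered s -> v \notin cut_covered s -> val v \notin s).
Proof.
move=> le_Kn cut_s size_s; split=> [max_s | [size_K adjacent]].
  by split; [apply: maximal_cuts_size | apply: maximal_cuts_adjacent size_s max_s].
exact: adjacent_maximal_cuts.
Qed.

End PathGraph.

Theorem lemmaA2 (n k : nat) (t : strat 'I_n) :
  2 ^ k < n ->
  in_Tk (path_graph n) k t ->
  (maximal_covered (path_graph n) k t <->
   (nleaves t = 2 ^ k /\
    forall u v : 'I_n, val u = (val v).-1 -> 0 < val v ->
      u \notin covered (path_graph n) t -> v \notin covered (path_graph n) t ->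
      exists2 L, L \in leafsets (path_graph n) setT t & (u \in L) && (v \in L))).
Proof.
move=> lt_kn [strat_t height_t]; have n_gt0 : 0 < n by lia.
rewrite setT_itv in strat_t.
have [s cut_s [size_t leaves]] := leafsets_cut_seq n_gt0 (leqnn n) strat_t.
rewrite -setT_itv in leaves.
have size_s : (size s).+1 <= 2 ^ k by rewrite -size_t nleaves_height.
have maximalE : maximal_covered (path_graph n) k t <-> maximal_cuts n (2 ^ k) s.
  rewrite /maximal_covered (covered_blocks leaves).
  by split=> max_t ex; apply: max_t; apply/(extend_coveredP _ _ n_gt0).
apply: iff_trans maximalE _; apply: iff_trans (maximal_cutsP (ltnW lt_kn) cut_s size_s) _.
rewrite size_t (covered_blocks leaves).
split=> -[-> adjacent]; split=> // u v uv v_gt0 u_unc v_unc.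
  exact: (iffRL (same_leafP leaves uv v_gt0) (adjacent u v uv v_gt0 u_unc v_unc)).
exact: (iffLR (same_leafP leaves uv v_gt0) (adjacent u v uv v_gt0 u_unc v_unc)).
Qed.
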